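(* Consider a finite set of time periods $\mathcal{T}$ and a finite set of user types $\mathcal{K}=\{1,\dots,K\}$, where type $k$ has aggregate demand $D_k^t\ge 0$ and value of lost load $V_k^t$ in period $t$, with $V_1^t\le\cdots\le V_K^t$. Let $D_a^t=\sum_kD_k^t>0$. For capacity $r\ge0$ and random variables $\Theta^t$ supported in $[0,1]$, let $s^t=\min(D_a^t,r\Theta^t)$, $d_k^t=\frac{D_k^t}{D_a^t}s^t$, $C_s^t(r,\Theta^t)=\sum_k(V_k^t-p)(D_k^t-d_k^t)$. Fix $p$ with $p\le V_1^t$ for all $t$, $c_r>0$, $\xi\ge0$. Let $f^{\mathrm{No}}(r)=\sum_tp\,\mathbb{E}[s^t]-c_rr$ and $f^{\mathrm{Ins}}(r,\pi)=\sum_k\sum_t\pi_k^tD_k^t+\sum_tp\,\mathbb{E}[s^t]-c_rr-\sum_t\mathbb{E}[C_s^t(r,\Theta^t)]$. Let $(r^*,\pi^* )$ be the optimal solution of Problem-Ins: minimize $\sum_k\sum_t\pi_k^tD_k^t$ over $r\ge0,\pi$ subject to $f^{\mathrm{Ins}}(r,\pi)\ge\xi$, $\pi_k^t-\pi_m^t=(V_k^t-V_m^t)\mathbb{E}[1-s^t/D_a^t]$ for all $t,m,k$, and $0\le\pi_k^t\le(V_k^t-p)\mathbb{E}[1-s^t/D_a^t]$ for all $t,k$. Let $r^\ddagger$ be the optimal solution of Problem-NoIns: maximize $r\ge0$ subject to $f^{\mathrm{No}}(r)\ge\xi$. Then the users' total cost under the insurance-providing utility, $\sum_t\sum_k(\pi_k^{t*}+p)D_k^t$,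 is no larger than the users' total cost under the no-insurance utility, $\sum_t\big(p\,\mathbb{E}[s^t(r^\ddagger,\Theta^t)]+\sum_kV_k^t\,\mathbb{E}[D_k^t-d_k^t(r^\ddagger,\Theta^t)]\big)$.
   Context: Expectations are over $\Theta^t$. Under the insurance contract, a user of type $k$ with demand $D_i^t$ who buys the type-$k$ item pays $\sum_t(\pi_k^t+p)D_i^t$ (lost load is fully reimbursed); without insurance, a user pays the electricity bill $p$ on delivered energy $d_i^t=\frac{D_i^t}{D_a^t}s^t$ and incurs lost-load cost $V_i^t(D_i^t-d_i^t)$ in expectation. The problems are assumed feasible with optimal solutions as described. *)

From mathcomp Require Import all_boot all_order all_algebra.
From mathcomp Require Import all_classical all_reals all_analysis.
Set Implicit Arguments. Unset Strict Implicit. Unset Printing Implicit Defensive.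
Import Order.TTheory GRing.Theory Num.Theory.
Local Open Scope ring_scope.

(* Model: T = finite set of periods (a finType); user types are 'I_K
   (type k+1 of the paper is the ordinal k). *)

Section Utility.
Variables (R : realType) (d : measure_display) (Omega : measurableType d).
Variable (P : probability Omega R).
Variables (T : finType) (K : nat).
Variables (D V : 'I_K -> T -> R) (p c_r xi : R) (Theta : T -> Omega -> R).

Definition Ex (f : Omega -> R) : R := Rintegral P setT f.

Definition Dagg (t : T) : R := \sum_(k < K) D k t.

Definition supply (r : R) (t : T) (th : R) : R := Num.min (Dagg t) (r * th).

Definition delivered (r : R) (k : 'I_K) (t : T) (th : R) : R :=
  D k t / Dagg t * supply r t th.

Definition Cs (r : R) (t : T) (th : R) : R :=
  \sum_(k < K) (V k t - p) * (D k t - delivered r k t th).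

Definition Es (r : R) (t : T) : R := Ex (fun w => supply r t (Theta t w)).

Definition Eshort (r : R) (t : T) : R :=
  Ex (fun w => 1 - supply r t (Theta t w) / Dagg t).

Definition f_No (r : R) : R := \sum_(t : T) p * Es r t - c_r * r.

Definition f_Ins (r : R) (pi : 'I_K -> T -> R) : R :=
  \sum_(k < K) \sum_(t : T) pi k t * D k t + \sum_(t : T) p * Es r t
  - c_r * r - \sum_(t : T) Ex (fun w => Cs r t (Theta t w)).

Definition ins_objective (pi : 'I_K -> T -> R) : R :=
  \sum_(k < K) \sum_(t : T) pi k t * D k t.

Definition feasible_Ins (r : R) (pi : 'I_K -> T -> R) : Prop :=
  [/\ 0 <= r, xi <= f_Ins r pi,
      (forall t m k, pi k t - pi m t = (V k t - V m t) * Eshort r t) &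
      (forall t k, 0 <= pi k t /\ pi k t <= (V k t - p) * Eshort r t)].

Definition optimal_Ins (r : R) (pi : 'I_K -> T -> R) : Prop :=
  feasible_Ins r pi /\
  forall r' pi', feasible_Ins r' pi' -> ins_objective pi <= ins_objective pi'.

Definition feasible_No (r : R) : Prop := 0 <= r /\ xi <= f_No r.

Definition optimal_No (r : R) : Prop :=
  feasible_No r /\ forall r', feasible_No r' -> r' <= r.

Definition cost_Ins (pi : 'I_K -> T -> R) : R :=
  \sum_(t : T) \sum_(k < K) (pi k t + p) * D k t.

Definition cost_No (r : R) : R :=
  \sum_(t : T) (p * Es r t +
     \sum_(k < K) V k t * Ex (fun w => D k t - delivered r k t (Theta t w))).

End Utility.

From mathcomp Require Import all_boot all_order all_algebra.
From mathcomp Require Import all_classical all_reals all_analysis.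
From mathcomp Require Import measurable_realfun ring.
Set Implicit Arguments. Unset Strict Implicit. Unset Printing Implicit Defensive.
Import Order.TTheory GRing.Theory Num.Theory.
Local Open Scope ring_scope.

(* Price insurance at the expected curtailment cost under the no-insurance
   capacity r = r‡: pi_k^t = (V_k^t - p) E[1 - s^t/D_a^t].  Since every type loses
   the same fraction of its demand, E[D_k^t - d_k^t] = D_k^t E[1 - s^t/D_a^t];
   hence the premiums collected equal the expected compensation paid, so
   f^Ins(r, pi) = f^No(r) and (r, pi) is feasible for Problem-Ins, and each
   user's insured cost (pi_k^t + p) D_k^t equals its expected uninsured cost.
   Optimality of pi* finishes. *)

Lemma Ex_affine {R : realType} {d : measure_display} {Omega : measurableType d}
    {P : probability Omega R} {g h : Omega -> R} (a b : R) :
  P.-integrable setT (EFin \o g) -> (forall w, h w = a + b * g w) ->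
  Ex P h = a + b * Ex P g.
Proof.
move=> ig /funext ->.
have icst : P.-integrable setT (EFin \o cst a) by exact: finite_measure_integrable_cst.
have ibg : P.-integrable setT (EFin \o (fun w => b * g w)).
  by apply: eq_integrable (integrableZl measurableT b ig) => // w _ /=; rewrite EFinM.
rewrite /Ex (RintegralD _ icst ibg) // Rintegral_cst // RintegralZl //.
by rewrite (congr1 fine (probability_setT P)) mulr1.
Qed.

Section FairPremium.
Variables (R : realType) (d : measure_display) (Omega : measurableType d).
Variable (P : probability Omega R).
Variables (T : finType) (K : nat).
Variables (D V : 'I_K -> T -> R) (p c_r xi : R) (Theta : T -> Omega -> R).
Hypothesis hDa : forall t, 0 < Dagg D t.
Hypothesis hTheta_meas : forall t, measurable_fun setT (Theta t).
Hypothesis hTheta_range : forall t w, 0 <= Theta t w <= 1.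

Lemma integrable_supply r t :
  P.-integrable setT (EFin \o (fun w => supply D r t (Theta t w))).
Proof.
apply: measurable_bounded_integrable => //.
- exact: (le_lt_trans (probability_le1 P measurableT) (ltry 1)).
- apply: measurable_minr; first exact: measurable_cst.
  by apply: measurable_funM => //; exact: measurable_cst.
exists (Dagg D t + `|r|); split; first by rewrite realE addr_ge0 // ltW.
move=> M hM w _; apply: ltW; apply: le_lt_trans hM.
have /andP[th0 th1] := hTheta_range t w.
rewrite /supply /Num.min; case: ifP => _.
  by rewrite gtr0_norm // lerDl.
by rewrite normrM (ger0_norm th0) (le_trans (ler_piMr _ th1)) // lerDr ltW.
Qed.

Lemma Ex_affine_supply r t (a b : R) (h : Omega -> R) :
  (forall w, h w = a + b * supply D r t (Theta t w)) ->
  Ex P h = a + b * Es P D Theta r t.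
Proof. exact: Ex_affine (integrable_supply r t). Qed.

Lemma Eshort_Es r t : Eshort P D Theta r t = 1 - Es P D Theta r t / Dagg D t.
Proof.
rewrite /Eshort (Ex_affine_supply (r := r) (t := t) (a := 1) (b := - (Dagg D t)^-1)).
  by rewrite mulNr mulrC.
by move=> w; rewrite mulNr mulrC.
Qed.

Lemma Es_Eshort r t : Es P D Theta r t = Dagg D t * (1 - Eshort P D Theta r t).
Proof. by rewrite Eshort_Es; field; rewrite gt_eqF. Qed.

Lemma Eshort_ge0 r t : 0 <= Eshort P D Theta r t.
Proof.
apply: Rintegral_ge0 => w _.
by rewrite subr_ge0 ler_pdivrMr // mul1r ge_min lexx.
Qed.

Lemma Ex_unserved r k t :
  Ex P (fun w => D k t - delivered D r k t (Theta t w)) =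
  D k t * Eshort P D Theta r t.
Proof.
rewrite (Ex_affine_supply (r := r) (t := t) (a := D k t) (b := - (D k t / Dagg D t))).
  by rewrite Es_Eshort; field; rewrite gt_eqF.
by move=> w; rewrite /delivered mulNr.
Qed.

Lemma Ex_Cs r t :
  Ex P (fun w => Cs D V p r t (Theta t w)) =
  \sum_(k < K) (V k t - p) * D k t * Eshort P D Theta r t.
Proof.
pose a := \sum_(k < K) (V k t - p) * D k t.
rewrite (Ex_affine_supply (r := r) (t := t) (a := a) (b := - (a / Dagg D t))).
  rewrite Es_Eshort.
  have -> : a + - (a / Dagg D t) * (Dagg D t * (1 - Eshort P D Theta r t)) =
            a * Eshort P D Theta r t by field; rewrite gt_eqF.
  by rewrite /a big_distrl.
move=> w; rewrite /Cs /delivered mulNr /a !big_distrl -sumrB /=.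
by apply: eq_bigr => k _; ring.
Qed.

Definition fair_premium r k t := (V k t - p) * Eshort P D Theta r t.

Lemma ins_objective_fair_premium r :
  ins_objective D (fair_premium r) =
  \sum_(t : T) Ex P (fun w => Cs D V p r t (Theta t w)).
Proof.
rewrite /ins_objective exchange_big; apply: eq_bigr => t _.
by rewrite Ex_Cs; apply: eq_bigr => k _; rewrite /fair_premium mulrAC.
Qed.

Lemma f_Ins_fair_premium r :
  f_Ins P D V p c_r Theta r (fair_premium r) = f_No P D p c_r Theta r.
Proof.
rewrite /f_Ins /f_No -/(ins_objective D (fair_premium r)).
by rewrite ins_objective_fair_premium; ring.
Qed.

Lemma fair_premium_feasible r :
  (forall k t, p <= V k t) -> feasible_No P D p c_r xi Theta r ->
  feasible_Ins P D V p c_r xi Theta r (fair_premium r).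
Proof.
move=> pV [r_ge0 f_No_ge]; split => //.
- by rewrite f_Ins_fair_premium.
- by move=> t m k; rewrite /fair_premium; ring.
- by move=> t k; rewrite mulr_ge0 ?subr_ge0 ?Eshort_ge0.
Qed.

Lemma cost_Ins_fair_premium r :
  cost_Ins D p (fair_premium r) = cost_No P D V p Theta r.
Proof.
rewrite /cost_Ins /cost_No; apply: eq_bigr => t _.
under [in RHS]eq_bigr do rewrite Ex_unserved.
rewrite Es_Eshort /Dagg big_distrl mulr_sumr -big_split /=.
by apply: eq_bigr => k _; rewrite /fair_premium; ring.
Qed.

End FairPremium.

Lemma cost_InsE (R : realType) (T : finType) (K : nat)
    (D pi : 'I_K -> T -> R) (p : R) :
  cost_Ins D p pi = ins_objective D pi + \sum_(t : T) \sum_(k < K) p * D k t.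
Proof.
rewrite /cost_Ins /ins_objective [in RHS]exchange_big -big_split.
by apply: eq_bigr => t _; rewrite -big_split; apply: eq_bigr => k _; rewrite mulrDl.
Qed.

Theorem proposition3 (R : realType) (d : measure_display)
  (Omega : measurableType d) (P : probability Omega R)
  (T : finType) (K : nat) (hK : (0 < K)%N)
  (D V : 'I_K -> T -> R) (p c_r xi : R) (Theta : T -> Omega -> R)
  (hD : forall k t, 0 <= D k t)
  (hDa : forall t, 0 < Dagg D t)
  (hV : forall t (k m : 'I_K), (k <= m)%N -> V k t <= V m t)
  (hTheta_meas : forall t, measurable_fun setT (Theta t))
  (hTheta_range : forall t w, 0 <= Theta t w <= 1)
  (hp : forall t, p <= V (Ordinal hK) t)
  (hcr : 0 < c_r) (hxi : 0 <= xi)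
  (rs : R) (pis : 'I_K -> T -> R) (rd : R)
  (hopt_ins : optimal_Ins P D V p c_r xi Theta rs pis)
  (hopt_no : optimal_No P D p c_r xi Theta rd) :
  cost_Ins D p pis <= cost_No P D V p Theta rd.
Proof.
have pV k t : p <= V k t by apply: le_trans (hp t) (hV t _ _ _).
have [_ pis_min] := hopt_ins.
have [rd_feasible _] := hopt_no.
have fair_feasible := fair_premium_feasible hDa hTheta_meas hTheta_range pV rd_feasible.
rewrite -(cost_Ins_fair_premium P V p hDa hTheta_meas hTheta_range) !cost_InsE lerD2r.
exact: pis_min fair_feasible.
Qed.
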